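(* Let $R$ be a commutative ring with unity, $\lambda$ a length function on $R$-modules, $S=R[x_1,\dots,x_k]$, and let $\bar N=(N_n)_{n\in\mathbb{N}}$ be an increasing filtering of the $S$-module $N$ with degrees $\bar\gamma\in\mathbb{N}^k$. Let $F_{\bar N}(t)=\sum_{n=0}^\infty\lambda(N_n)t^n$. Then $F_{\bar N}=F_{\mathrm{Rees}(\bar N)}$. Consequently, if $\gamma_i>0$ for $i=1,\dots,k$, $\lambda(N_n)<\infty$ for every $n$, and $\mathrm{Rees}(\bar N)$ is Noetherian as an $S[y]$-module, then there is a polynomial $p(t)\in\mathbb{R}[t]$ with \[F_{\bar N}(t)=\frac{p(t)}{(1-t)\prod_{i=1}^k(1-t^{\gamma_i})}.\]
   Context: A length function on $R$-modules is a function $\lambda$ from $R$-modules to $\mathbb{R}_{\ge0}\cup\{\infty\}$ with $\lambda(0)=0$, invariant under isomorphism, additive on short exact sequences, and with $\lambda(M)=\sup\{\lambda(M'):M'\le M$ finitely generated$\}$. An increasing filtering of an $S$-module $N$ with degrees $\bar\gamma=(\gamma_1,\dots,\gamma_k)\in\mathbb{N}^k$ is an increasing sequence of $R$-submodules $N_0\le N_1\le\dots$ with $\bigcup_iN_i=N$ and $x_iN_j\subseteq N_{j+\gamma_i}$ for all $j\in\mathbb{N}$, $i\le k$. Its blow-up $\mathrm{Rees}(\bar N)=\bigoplus_{n\in\mathbb{N}}N_ny^n$ is the graded $S[y]$-module with grading given by this decomposition, with $x_i(vy^j)=(x_iv)y^{j+\gamma_i}$ (so $x_i$ has degree $\gamma_i$)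 and $y(vy^j)=vy^{j+1}$ (so $y$ has degree $1$) for $v\in N_j$, extended $R$-linearly. For an $\mathbb{N}$-graded module $\bar M=\bigoplus M_n$, $F_{\bar M}(t)=\sum_n\lambda(M_n)t^n$. *)

From HB Require Import structures.
From mathcomp Require Import all_boot all_order all_algebra.
From mathcomp Require Import all_classical all_reals ereal.
Set Implicit Arguments. Unset Strict Implicit. Unset Printing Implicit Defensive.
Import Order.TTheory GRing.Theory Num.Theory.
Local Open Scope ring_scope.
Local Open Scope classical_set_scope.

(* A length function takes a module M and a
   submodule P of M (the module itself is P = predT) and returns its length. *)

Section Defs.
Variables (R : comPzRingType) (Real : realType).

Definition is_submod (M : lmodType R) (P : M -> Prop) : Prop :=
  P 0 /\ forall (a : R) (u v : M), P u -> P v -> P (a *: u + v).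

Definition linear_on (M M' : lmodType R) (P : M -> Prop) (f : M -> M') : Prop :=
  forall (a : R) (u v : M), P u -> P v -> f (a *: u + v) = a *: f u + f v.

Definition span_of (M : lmodType R) (s : seq M) : M -> Prop :=
  fun v => exists c : 'I_(size s) -> R, v = \sum_(i < size s) c i *: s`_i.

Definition fin_gen_submod (M : lmodType R) (Q : M -> Prop) : Prop :=
  exists s : seq M, forall v, Q v <-> span_of s v.

Definition length_fun
  (lam : forall M : lmodType R, (M -> Prop) -> \bar Real) : Prop :=
  (forall (M : lmodType R) (P : M -> Prop), (0 <= lam M P)%E) /\
  (forall (M : lmodType R), lam M (fun v => v = 0) = 0%E) /\
  (forall (M M' : lmodType R) (P : M -> Prop) (P' : M' -> Prop) (f : M -> M'),
      is_submod P -> is_submod P' -> linear_on P f ->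
      (forall u v, P u -> P v -> f u = f v -> u = v) ->
      (forall w, P' w <-> exists2 u, P u & f u = w) ->
      lam M P = lam M' P') /\
  (* additivity on short exact sequences 0 -> A -> B -> C -> 0 *)
  (forall (M1 M2 M3 : lmodType R) (A : M1 -> Prop) (B : M2 -> Prop)
          (C : M3 -> Prop) (f : M1 -> M2) (g : M2 -> M3),
      is_submod A -> is_submod B -> is_submod C ->
      linear_on A f -> linear_on B g ->
      (forall u v, A u -> A v -> f u = f v -> u = v) ->
      (forall u, A u -> B (f u)) ->
      (forall w, C w <-> exists2 v, B v & g v = w) ->
      (forall v, B v -> (g v = 0 <-> exists2 u, A u & f u = v)) ->
      lam M2 B = (lam M1 A + lam M3 C)%E) /\
  (forall (M : lmodType R) (P : M -> Prop), is_submod P ->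
      lam M P = ereal_sup [set lam M Q | Q in
                   [set Q : M -> Prop | is_submod Q /\ fin_gen_submod Q /\
                                        (forall v, Q v -> P v)]]).

(* An S-module, S = R[x_1,...,x_k], is an R-module N with k pairwise
   commuting R-linear endomorphisms xs i (the actions of the variables). *)
Definition S_module_str (N : lmodType R) (k : nat) (xs : 'I_k -> N -> N) : Prop :=
  (forall i, linear_on (fun _ => True) (xs i)) /\
  (forall i j v, xs i (xs j v) = xs j (xs i v)).

Definition incr_filtering (N : lmodType R) (k : nat) (xs : 'I_k -> N -> N)
    (gam : 'I_k -> nat) (Nf : nat -> N -> Prop) : Prop :=
  (forall n, is_submod (Nf n)) /\
  (forall n v, Nf n v -> Nf n.+1 v) /\
  (forall v : N, exists n, Nf n v) /\
  (forall i j v, Nf j v -> Nf (j + gam i)%N (xs i v)).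

(* The blow-up Rees(N) = (+)_n N_n y^n, realised inside the R-module nat -> N:
   an element is a finitely supported sequence (v_n) with v_n in N_n. *)
Definition rees (N : lmodType R) (Nf : nat -> N -> Prop) : (nat -> N) -> Prop :=
  fun w => (forall n, Nf n (w n)) /\ exists m, forall n, (m <= n)%N -> w n = 0.

Definition rees_comp (N : lmodType R) (Nf : nat -> N -> Prop) (n : nat)
  : (nat -> N) -> Prop :=
  fun w => rees Nf w /\ forall m, m <> n -> w m = 0.

Definition rees_x (N : lmodType R) (k : nat) (xs : 'I_k -> N -> N)
    (gam : 'I_k -> nat) (i : 'I_k) (w : nat -> N) : nat -> N :=
  fun m => if (gam i <= m)%N then xs i (w (m - gam i)%N) else 0.

Definition rees_y (N : lmodType R) (w : nat -> N) : nat -> N :=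
  fun m => if m is m'.+1 then w m' else 0.

Definition rees_Sy_submod (N : lmodType R) (k : nat) (xs : 'I_k -> N -> N)
    (gam : 'I_k -> nat) (Nf : nat -> N -> Prop) (Q : (nat -> N) -> Prop) : Prop :=
  is_submod Q /\ (forall w, Q w -> rees Nf w) /\
  (forall i w, Q w -> Q (rees_x xs gam i w)) /\
  (forall w, Q w -> Q (rees_y w)).

Definition rees_noetherian (N : lmodType R) (k : nat) (xs : 'I_k -> N -> N)
    (gam : 'I_k -> nat) (Nf : nat -> N -> Prop) : Prop :=
  forall Q : nat -> (nat -> N) -> Prop,
    (forall n, rees_Sy_submod xs gam Nf (Q n)) ->
    (forall n w, Q n w -> Q n.+1 w) ->
    exists n0, forall n, (n0 <= n)%N -> forall w, Q n w <-> Q n0 w.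

End Defs.

From HB Require Import structures.
From mathcomp Require Import all_boot all_order all_algebra.
From mathcomp Require Import all_classical all_reals ereal.
From mathcomp Require Import zify lra.
Set Implicit Arguments. Unset Strict Implicit. Unset Printing Implicit Defensive.
Import Order.TTheory GRing.Theory Num.Theory.
Local Open Scope ring_scope.
Local Open Scope classical_set_scope.

(* The map v |-> v y^n identifies N_n with the degree-n component of Rees(N),
   which gives F_N = F_Rees(N).
   For the rational form, let A <= B be graded S[y]-submodules of Rees(N) and
   h(n) = lam(B_n) - lam(A_n) the Hilbert function of B/A. Multiplication by a
   generator z of degree d gives an exact sequence
     0 -> ((A :_B z)/A)_n -> (B/A)_n -> (B/A)_(n+d) -> (B/(A + zB))_(n+d) -> 0,
   so (1 - t^d) h is a combination of Hilbert functions of two quotients that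
   are annihilated by z. After one such step for each of x_1, ..., x_k and y,
   all quotients are annihilated by every generator. For such a quotient B/A,
   the submodules equal to B in degrees <= m and to A above form an ascending
   chain, and its stabilisation forces B_n = A_n for large n. Hence
   (1 - t) prod_i (1 - t^gam_i) F_N(t) is a polynomial. *)

Section Convolution.
Variable K : comNzRingType.

Definition shift (d : nat) (g : nat -> K) : nat -> K :=
  fun n => if (d <= n)%N then g (n - d)%N else 0.

Definition eventually_zero (g : nat -> K) : Prop :=
  exists m, forall n, (m <= n)%N -> g n = 0.

Definition conv (q : {poly K}) (h : nat -> K) : nat -> K :=
  fun n => \sum_(j < n.+1) q`_j * h (n - j)%N.

Lemma conv_coefM q h m n : (n < m)%N -> conv q h n = (q * \poly_(i < m) h i)`_n.
Proof.
move=> lt_nm; rewrite coefM; apply: eq_bigr => j _.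
by rewrite coef_poly (leq_ltn_trans (leq_subr j n) lt_nm).
Qed.

Lemma convBl q1 q2 h : conv (q1 - q2) h = conv q1 h - conv q2 h.
Proof.
by apply: funext => n; rewrite /conv !fctE -sumrB; apply: eq_bigr => j _; rewrite coefB mulrBl.
Qed.

Lemma convBr q f g : conv q (f - g) = conv q f - conv q g.
Proof.
by apply: funext => n; rewrite /conv !fctE -sumrB; apply: eq_bigr => j _; rewrite mulrBr.
Qed.

Lemma conv_XnM d q h : conv ('X^d * q) h = conv q (shift d h).
Proof.
apply: funext => n; rewrite (conv_coefM _ _ (ltnSn n)) -mulrA mulrCA coefM.
apply: eq_bigr => j _; rewrite coefXnM coef_poly /shift ltnNge.
by rewrite ltnS (leq_trans (leq_subr _ _) (leq_subr _ _)); case: leqP.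
Qed.

Lemma eventually_zero_conv q h : eventually_zero h -> eventually_zero (conv q h).
Proof.
move=> [m hm]; exists (m + size q)%N => n le_n; apply: big1 => j _.
have [lt_jq|le_qj] := ltnP j (size q); last by rewrite nth_default ?mul0r.
by rewrite hm ?mulr0 //; lia.
Qed.

Lemma eventually_zeroB f g : eventually_zero f -> eventually_zero g -> eventually_zero (f - g).
Proof.
move=> [m1 hf] [m2 hg]; exists (maxn m1 m2) => n; rewrite geq_max => /andP[h1 h2].
by rewrite !fctE hf // hg // subr0.
Qed.

End Convolution.

Section Submodules.
Variable R : comPzRingType.
Implicit Types M : lmodType R.

Lemma submod0 M (X : set M) : is_submod X -> X 0.
Proof. by case. Qed.

Lemma submodD M (X : set M) u v : is_submod X -> X u -> X v -> X (u + v).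
Proof. by move=> [_ hX] Xu Xv; have := hX 1 u v Xu Xv; rewrite scale1r. Qed.

Lemma submodZ M (X : set M) a u : is_submod X -> X u -> X (a *: u).
Proof. by move=> [X0 hX] Xu; have := hX a u 0 Xu X0; rewrite addr0. Qed.

Lemma submodN M (X : set M) u : is_submod X -> X u -> X (- u).
Proof. by move=> hX /(submodZ (-1) hX); rewrite scaleN1r. Qed.

Lemma linear_on0 (M M' : lmodType R) (X : set M) (f : M -> M') :
  is_submod X -> linear_on X f -> f 0 = 0.
Proof.
move=> /submod0 X0 /(_ 1 0 0 X0 X0); rewrite !scale1r addr0 => f0.
by apply: (@addrI _ (f 0)); rewrite addr0 -f0.
Qed.

Lemma linear_onD (M M' : lmodType R) (X : set M) (f : M -> M') u v :
  linear_on X f -> X u -> X v -> f (u + v) = f u + f v.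
Proof. by move=> hf Xu Xv; have := hf 1 u v Xu Xv; rewrite !scale1r. Qed.

Lemma is_submod_setX (M M' : lmodType R) (X : set M) (Y : set M') :
  is_submod X -> is_submod Y -> is_submod (X `*` Y).
Proof.
move=> hX hY; split; first by split; apply: submod0.
by move=> a u v [Xu Yu] [Xv Yv]; split; [apply: hX.2 | apply: hY.2].
Qed.

Lemma is_submod_preimage (M M' : lmodType R) (X : set M) (Y : set M') (f : M -> M') :
  is_submod X -> is_submod Y -> linear_on X f -> is_submod (X `&` f @^-1` Y).
Proof.
move=> hX hY hf; split.
  by split; rewrite /preimage/= ?(linear_on0 hX hf); apply: submod0.
move=> a u v [Xu Yu] [Xv Yv]; split; first exact: hX.2.
by rewrite /preimage/= hf //; apply: hY.2.
Qed.

Lemma is_submod_image (M M' : lmodType R) (X : set M) (f : M -> M') :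
  is_submod X -> linear_on X f -> is_submod (f @` X).
Proof.
move=> hX hf; split; first by exists 0; [apply: submod0 | apply: linear_on0 hf].
by move=> a _ _ [u Xu <-] [v Xv <-]; exists (a *: u + v); [apply: hX.2 | apply: hf].
Qed.

Lemma is_submod_add M (X Y : set M) :
  is_submod X -> is_submod Y -> is_submod [set x + y | x in X & y in Y].
Proof.
move=> hX hY; split.
  by exists 0; [apply: submod0 | exists 0; rewrite ?addr0 //; apply: submod0].
move=> a _ _ [x Xx [y Yy <-]] [x' Xx' [y' Yy' <-]].
exists (a *: x + x'); first exact: hX.2.
by exists (a *: y + y'); [apply: hY.2 | rewrite scalerDr addrACA].
Qed.

End Submodules.

Section LengthFunctions.
Variables (R : comPzRingType) (Real : realType)
  (lam : forall M : lmodType R, set M -> \bar Real).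
Hypothesis lam_length : length_fun lam.
Implicit Types M : lmodType R.

Lemma lam_ge0 M (X : set M) : (0 <= lam X)%E.
Proof. exact: lam_length.1. Qed.

Lemma lam_le M (X Y : set M) : is_submod X -> is_submod Y -> X `<=` Y ->
  (lam X <= lam Y)%E.
Proof.
move=> hX hY XY; have [_ [_ [_ [_ lam_sup]]]] := lam_length.
rewrite (lam_sup _ _ hX) (lam_sup _ _ hY); apply/ereal_sup_le/image_subset.
by move=> Q [hQ [fgQ QX]]; split; [|split] => // v /QX /XY.
Qed.

Lemma lam_setX (M M' : lmodType R) (X : set M) (Y : set M') : is_submod X -> is_submod Y ->
  lam (X `*` Y) = (lam X + lam Y)%E.
Proof.
move=> hX hY; have [_ [_ [_ [lam_ses _]]]] := lam_length.
apply: (lam_ses _ _ _ X _ Y (fun x => (x, 0)) snd) => //.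
- exact: is_submod_setX.
- by move=> a u v _ _; apply: injective_projections => /=; rewrite ?scaler0 ?addr0.
- by move=> u v _ _ [].
- by move=> u Xu; split => //; apply: submod0.
- move=> w; split; last by move=> [[u w'] [_ Yw'] <-].
  by move=> Yw; exists (0, w) => //; split => //; apply: submod0.
- by move=> [u w] [Xu Yw] /=; split => [->|[u' _ [_ <-]]] //; exists u.
Qed.

(* From the exact sequence 0 -> X /\ f^-1(Y) -> X * Y -> Y + f(X) -> 0 given by
   v |-> (v, - f v) and (v, y) |-> y + f v. *)
Lemma lam_preimage_add (M M' : lmodType R) (X : set M) (Y : set M') (f : M -> M') :
  is_submod X -> is_submod Y -> linear_on X f ->
  (lam X + lam Y = lam (X `&` f @^-1` Y) + lam [set (y + u)%R | y in Y & u in f @` X])%E.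
Proof.
move=> hX hY hf; have [_ [_ [_ [lam_ses _]]]] := lam_length.
rewrite -lam_setX //.
apply: (lam_ses _ _ _ _ _ _ (fun v => (v, - f v)) (fun p => p.2 + f p.1)).
- exact: is_submod_preimage.
- exact: is_submod_setX.
- exact/is_submod_add/is_submod_image.
- move=> a u v [Xu _] [Xv _]; apply: injective_projections => //=.
  by rewrite hf // opprD scalerN.
- move=> a [u y] [v z] [/= Xu _] [/= Xv _] /=.
  by rewrite hf // scalerDr addrACA.
- by move=> u v _ _ [].
- by move=> u [Xu Yfu]; split => //; apply: submodN.
- move=> w; split; first by move=> [y Yy [_ [u Xu <-] <-]]; exists (u, y).
  by move=> [[u y] [Xu Yy] <-]; exists y => //; exists (f u) => //; exists u.
- move=> [u y] [/= Xu Yy]; split => [/eqP|[v [Xv _] [<- <-]]]; last by rewrite addNr.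
  rewrite addr_eq0 => /eqP y_eq; exists u; last by rewrite y_eq.
  by split => //; rewrite /preimage/= -[f u]opprK -y_eq; apply: submodN.
Qed.

End LengthFunctions.

Section ReesModule.
Variables (R : comPzRingType) (N : lmodType R) (P : nat -> set N).
Hypothesis P_submod : forall n, is_submod (P n).

Definition single (n : nat) (v : N) : nat -> N := fun m => if m == n then v else 0.

Lemma rees_single n v : P n v -> rees P (single n v).
Proof.
move=> Pv; split=> [m|]; first by rewrite /single; case: eqP => [->|_] //; apply: submod0.
by exists n.+1 => m; rewrite /single; case: eqP => [->|//]; rewrite ltnn.
Qed.

Lemma is_submod_rees : is_submod (rees P).
Proof.
split; first by split=> [n|]; [apply: submod0 | exists 0%N].
move=> a u v [Pu [mu u0]] [Pv [mv v0]]; split=> [n|]; first exact: (P_submod n).2.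
exists (maxn mu mv) => n; rewrite geq_max => /andP[le_mu le_mv].
by rewrite !fctE u0 // v0 // scaler0 addr0.
Qed.

Lemma is_submod_rees_comp n : is_submod (rees_comp P n).
Proof.
split; first by split=> [|m _]; [apply: is_submod_rees.1 |].
move=> a u v [Ru u0] [Rv v0]; split; first exact: is_submod_rees.2.
by move=> m ne_mn; rewrite !fctE u0 // v0 // scaler0 addr0.
Qed.

Variables (Real : realType) (lam : forall M : lmodType R, set M -> \bar Real).
Hypothesis lam_length : length_fun lam.

Lemma lam_rees_comp n : lam (P n) = lam (rees_comp P n).
Proof.
have [_ [_ [lam_iso _]]] := lam_length.
apply: (lam_iso _ _ _ _ (single n)) => //.
- exact: is_submod_rees_comp.
- move=> a u v _ _; apply: funext => m; rewrite !fctE /single.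
  by case: eqP => // _; rewrite scaler0 addr0.
- by move=> u v _ _ /(congr1 (fun w => w n)); rewrite /single eqxx.
- move=> w; split=> [[Rw w0]|[v Pv <-]].
    exists (w n); first exact: Rw.1.
    by apply: funext => m; rewrite /single; case: eqP => [->|/w0].
  by split=> [|m /eqP ne_mn]; [apply: rees_single | rewrite /single (negbTE ne_mn)].
Qed.

End ReesModule.

Section GradedSubmodules.
Variables (R : comPzRingType) (N : lmodType R) (k : nat) (xs : 'I_k -> N -> N)
  (gam : 'I_k -> nat) (Nf : nat -> set N).
Hypothesis xs_action : S_module_str xs.
Hypothesis Nf_filtering : incr_filtering xs gam Nf.

(* The generators of S[y]: [Some i] is x_i, and [None] is y, which acts on N
   as the identity and raises the degree by one. *)
Definition act (o : option 'I_k) : N -> N := if o is Some i then xs i else id.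
Definition deg (o : option 'I_k) : nat := if o is Some i then gam i else 1%N.

Lemma act_linear o (X : set N) : linear_on X (act o).
Proof. by case: o => [i|] a u v _ _ //=; apply: xs_action.1. Qed.

Lemma act0 o : act o 0 = 0.
Proof. by apply: (linear_on0 (X := setT)); [split | apply: act_linear]. Qed.

Lemma actD o u v : act o (u + v) = act o u + act o v.
Proof. by apply: (linear_onD (X := setT)); first exact: act_linear. Qed.

Lemma act_comm o o' v : act o (act o' v) = act o' (act o v).
Proof. by case: o => [i|]; case: o' => [j|] //=; apply: xs_action.2. Qed.

(* A graded S[y]-submodule of Rees(N), given by its homogeneous components. *)
Record graded (P : nat -> set N) : Prop := Graded {
  graded_submod : forall n, is_submod (P n);
  graded_act : forall o n, P n `<=` act o @^-1` P (n + deg o)%N;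
  graded_sub : forall n, P n `<=` Nf n }.

Lemma graded_Nf : graded Nf.
Proof.
have [Nf_submod [Nf_incr [_ Nf_x]]] := Nf_filtering.
split=> [//| -[i|] n v /= | n v //]; first exact: Nf_x.
by rewrite addn1; apply: Nf_incr.
Qed.

Lemma graded0 : graded (fun=> [set 0]).
Proof.
have [Nf_submod _ _] := graded_Nf.
split=> [n | o n v -> | n v ->]; [| exact: act0 | exact: submod0].
by split=> // a u v -> ->; rewrite scaler0 addr0.
Qed.

Definition rees_act o (w : nat -> N) : nat -> N :=
  fun m => if (deg o <= m)%N then act o (w (m - deg o)%N) else 0.

Lemma rees_act_closed P o w : graded P -> rees P w -> rees P (rees_act o w).
Proof.
move=> [P_submod P_act _] [Pw [m w0]]; split=> [n|].
  rewrite /rees_act; case: leqP => [le_dn|_]; last exact: submod0.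
  by have := P_act o _ _ (Pw (n - deg o)%N); rewrite subnK.
exists (m + deg o)%N => n le_n; rewrite /rees_act.
by rewrite (leq_trans (leq_addl _ _) le_n) w0 ?act0 //; lia.
Qed.

Lemma rees_Sy_submod_graded P : graded P -> rees_Sy_submod xs gam Nf (rees P).
Proof.
move=> gP; have [P_submod _ P_Nf] := gP.
split; first exact: is_submod_rees.
split; first by move=> w [Pw w0]; split=> // n; apply/P_Nf/Pw.
split; first by move=> i w; apply: (rees_act_closed (Some i)).
move=> w; have -> : rees_y w = rees_act None w.
  by apply: funext => -[|m]; rewrite /rees_act //= subn1.
exact: rees_act_closed.
Qed.

Variables (Real : realType) (lam : forall M : lmodType R, set M -> \bar Real).
Hypothesis lam_length : length_fun lam.
Hypothesis Nf_finite : forall n, (lam (Nf n) < +oo)%E.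
Hypothesis Rees_noetherian : rees_noetherian xs gam Nf.

Definition hilb (A B : nat -> set N) : nat -> Real :=
  fun n => fine (lam (B n)) - fine (lam (A n)).

Lemma lam_graded_fin_num P n : graded P -> lam (P n) \is a fin_num.
Proof.
move=> P_graded; rewrite ge0_fin_numE ?lam_ge0 //; apply: le_lt_trans (Nf_finite n).
by apply: lam_le => //;
  [exact: graded_submod P_graded n | exact: graded_submod graded_Nf n | exact: graded_sub].
Qed.

Definition colon (A B : nat -> set N) o : nat -> set N :=
  fun n => B n `&` act o @^-1` A (n + deg o)%N.

Definition fam_shift (B : nat -> set N) d : nat -> set N :=
  fun m => if (d <= m)%N then B (m - d)%N else [set 0].

Definition add_image (A B : nat -> set N) o : nat -> set N :=
  fun m => [set (a + u)%R | a in A m & u in act o @` fam_shift B (deg o) m].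

Lemma fam_shift_addn B d n : fam_shift B d (n + d) = B n.
Proof. by rewrite /fam_shift leq_addl addnK. Qed.

Section Subquotients.
Variables (A B : nat -> set N).
Hypotheses (A_graded : graded A) (B_graded : graded B) (A_sub_B : forall n, A n `<=` B n).

Lemma graded_colon o : graded (colon A B o).
Proof.
have [A_submod A_act _] := A_graded; have [B_submod B_act B_Nf] := B_graded.
split=> [n | o' n v [Bv Aov] | n v [/B_Nf //]].
  exact/is_submod_preimage/act_linear.
split; first exact: B_act.
by rewrite /preimage/= act_comm addnAC; apply: A_act.
Qed.

Lemma A_sub_colon o n : A n `<=` colon A B o n.
Proof. by move=> v Av; split; [apply: A_sub_B | apply: graded_act]. Qed.

Lemma is_submod_fam_shift d m : is_submod (fam_shift B d m).
Proof.
rewrite /fam_shift; case: leqP => _; first exact: graded_submod.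
by split=> // a u v -> ->; rewrite scaler0 addr0.
Qed.

Lemma fam_shift_act d o m u :
  fam_shift B d m u -> fam_shift B d (m + deg o) (act o u).
Proof.
rewrite /fam_shift; case: (leqP d m) => [le_dm | _].
  by rewrite (leq_trans le_dm (leq_addr _ _)) -addnBAC //; apply: graded_act.
move=> ->; rewrite act0; case: ifP => // _; exact: submod0 (graded_submod B_graded _).
Qed.

Lemma add_image_act o n : B n `<=` act o @^-1` add_image A B o (n + deg o)%N.
Proof.
move=> v Bv; exists 0; first exact: submod0 (graded_submod A_graded _).
by exists (act o v); [exists v; rewrite ?fam_shift_addn | rewrite add0r].
Qed.

Lemma A_sub_add_image o m : A m `<=` add_image A B o m.
Proof.
move=> a Aa; exists a => //; exists 0; last by rewrite addr0.
by exists 0; [exact: submod0 (is_submod_fam_shift _ _) | apply: act0].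
Qed.

Lemma add_image_sub o m : add_image A B o m `<=` B m.
Proof.
move=> _ [a /A_sub_B Ba [_ [u Bu <-] <-]].
apply: submodD Ba _; first exact: graded_submod.
move: Bu; rewrite /fam_shift; case: leqP => [le_dm | _ ->]; last first.
  by rewrite act0; apply: submod0 (graded_submod B_graded _).
by move=> /(graded_act B_graded o); rewrite subnK.
Qed.

Lemma graded_add_image o : graded (add_image A B o).
Proof.
split=> [m | o' m _ [a Aa [_ [u Bu <-] <-]] | m v /add_image_sub/(graded_sub B_graded) //].
  by apply/is_submod_add/is_submod_image/act_linear;
    [apply: graded_submod | apply: is_submod_fam_shift].
rewrite /preimage/= actD act_comm; exists (act o' a); first exact: graded_act.
by exists (act o (act o' u)) => //; exists (act o' u) => //; apply: fam_shift_act.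
Qed.

(* Multiplication by [o] on B/A has kernel [colon A B o]/A and, up to a shift
   by [deg o], cokernel B/[add_image A B o]. *)
Lemma hilb_sub_shift o :
  hilb A B - shift (deg o) (hilb A B)
  = hilb (add_image A B o) B - shift (deg o) (hilb A (colon A B o)).
Proof.
apply: funext => n; rewrite !fctE /shift /hilb; set d := deg o.
case: leqP => [le_dn | lt_nd]; last first.
  suff -> : add_image A B o n = A n by [].
  apply/seteqP; split=> [_ [a Aa [_ [u Fu <-] <-]] | ]; last exact: A_sub_add_image.
  by move: Fu; rewrite /fam_shift leqNgt lt_nd => ->; rewrite act0 addr0.
move: (n - d)%N (subnK le_dn) => m <-.
have := lam_preimage_add lam_length (graded_submod B_graded m)
  (graded_submod A_graded (m + d)) (act_linear o (X := B m)).
rewrite -[X in lam [set _ + _ | _ in _ & _ in act o @` X]](fam_shift_addn B d m).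
rewrite -/(colon A B o m) -/(add_image A B o (m + d)) => /(congr1 fine).
rewrite !fineD; first lra.
- exact: lam_graded_fin_num (graded_colon o).
- exact: lam_graded_fin_num (graded_add_image o).
- exact: lam_graded_fin_num B_graded.
- exact: lam_graded_fin_num A_graded.
Qed.

Lemma hilb_eventually_zero :
  (forall o n, B n `<=` act o @^-1` A (n + deg o)%N) -> eventually_zero (hilb A B).
Proof.
move=> B_to_A.
pose C m n := if (n <= m)%N then B n else A n.
have A_sub_C m n : A n `<=` C m n.
  by move=> v Av; rewrite /C; case: ifP => // _; apply: A_sub_B.
have C_sub_B m n : C m n `<=` B n.
  by move=> v; rewrite /C; case: ifP => // _; apply: A_sub_B.
have C_graded m : graded (C m).
  split=> [n | o n v Cv | n v /C_sub_B /(graded_sub B_graded) //].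
    by rewrite /C; case: ifP => _; apply: graded_submod.
  move: Cv; rewrite {1}/C; case: (leqP n m) => [_ /(B_to_A o) /(A_sub_C m) // | lt_mn Av].
  rewrite /preimage /= /C leqNgt (leq_trans lt_mn (leq_addr _ _)).
  exact: graded_act.
have C_incr m : rees (C m) `<=` rees (C m.+1).
  move=> w [Cw w0]; split=> // n; have := Cw n; rewrite /C.
  case: (leqP n m) => [le_nm | _]; first by rewrite (leqW le_nm).
  by case: ifP => // _; apply: A_sub_B.
have [n0 C_stable] := Rees_noetherian (fun m => rees_Sy_submod_graded (C_graded m)) C_incr.
exists n0.+1 => n lt_n0n.
suff B_eq_A : B n = A n by rewrite /hilb B_eq_A subrr.
apply/seteqP; split=> [v Bv | ]; last exact: A_sub_B.
have : rees (C n0) (single n v).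
  apply/(C_stable n (ltnW lt_n0n)); apply: rees_single; last by rewrite /C leqnn.
  exact: graded_submod.
by move=> [/(_ n)]; rewrite /single eqxx /C leqNgt lt_n0n.
Qed.

End Subquotients.

Lemma conv_hilb_eventually_zero (L : seq (option 'I_k)) A B q :
  graded A -> graded B -> (forall n, A n `<=` B n) ->
  (forall o, o \notin L -> forall n, B n `<=` act o @^-1` A (n + deg o)%N) ->
  eventually_zero (conv (q * \prod_(o <- L) (1 - 'X^(deg o))) (hilb A B)).
Proof.
elim: L A B q => [|o L IH] A B q A_graded B_graded A_sub_B B_to_A.
  rewrite big_nil mulr1; apply/eventually_zero_conv/hilb_eventually_zero => // o.
  exact: B_to_A.
rewrite big_cons mulrCA mulrBl mul1r convBl conv_XnM -convBr hilb_sub_shift //.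
rewrite convBr -conv_XnM mulrA; apply: eventually_zeroB; apply: IH => //.
- exact: graded_add_image.
- exact: add_image_sub.
- move=> o' o'_notin n v Bv; have [->|ne] := eqVneq o' o; first exact: add_image_act.
  by apply/A_sub_add_image/B_to_A; rewrite // in_cons negb_or ne.
- exact: graded_colon.
- exact: A_sub_colon.
- move=> o' o'_notin n v [Bv Aov]; have [->|ne] := eqVneq o' o; first exact: Aov.
  by apply: B_to_A; rewrite // in_cons negb_or ne.
Qed.

End GradedSubmodules.

Theorem theorem4p2 (R : comPzRingType) (Real : realType)
  (lam : forall M : lmodType R, (M -> Prop) -> \bar Real)
  (N : lmodType R) (k : nat) (xs : 'I_k -> N -> N) (gam : 'I_k -> nat)
  (Nf : nat -> N -> Prop) :
  length_fun lam -> S_module_str xs -> incr_filtering xs gam Nf ->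
  (* F_N = F_Rees(N), coefficientwise *)
  (forall n : nat, lam N (Nf n) = lam (nat -> N) (rees_comp Nf n)) /\
  ((forall i, (0 < gam i)%N) ->
   (forall n, (lam N (Nf n) < +oo)%E) ->
   rees_noetherian xs gam Nf ->
   exists p : {poly Real},
     forall n : nat,
       \sum_(j < n.+1)
          ((1 - 'X) * \prod_(i < k) (1 - 'X^(gam i)) : {poly Real})`_j
          * fine (lam N (Nf (n - j)%N))
       = p`_n).
Proof.
move=> lam_length xs_action Nf_filtering.
have Nf_graded := graded_Nf Nf_filtering.
split=> [n | _ Nf_finite Rees_noetherian].
  exact: (lam_rees_comp (graded_submod Nf_graded) lam_length n).
pose L := None :: map Some (enum 'I_k).
have zero_sub_Nf n : [set 0] `<=` Nf n.
  by move=> v ->; apply: submod0 (graded_submod Nf_graded n).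
have L_total o : o \notin L -> forall n, Nf n `<=` act xs o @^-1` [set 0].
  by case: o => [i|]; rewrite inE ?map_f ?mem_enum.
set Q := (1 - 'X) * _.
have prodE : \prod_(o <- L) (1 - 'X^(deg gam o)) = Q :> {poly Real}.
  by rewrite big_cons expr1 big_map big_enum.
have hilbE : hilb lam (fun=> [set 0]) Nf = fun n => fine (lam N (Nf n)).
  by apply: funext => n; rewrite /hilb lam_length.2.1 subr0.
have [m conv_eventually_zero] := conv_hilb_eventually_zero xs_action Nf_filtering
  lam_length Nf_finite Rees_noetherian 1 (graded0 xs_action Nf_filtering) Nf_graded
  zero_sub_Nf L_total.
rewrite mul1r prodE hilbE in conv_eventually_zero.
exists (\poly_(n < m) conv Q (fun n => fine (lam N (Nf n))) n).
by move=> n; rewrite coef_poly; case: ltnP => [// | /conv_eventually_zero].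
Qed.
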